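(* Let $\rho$ be a density operator on $\mathbb{C}^d$. Let $\rho'=U_A(\rho\otimes|0\rangle\langle0|^{\otimes d})U_A^\dagger$, a state of $d+1$ parties (the qudit and $d$ qubits), and let $\rho''=\Delta(\rho')$, a state of $d$ parties (the $d$ qubits). Then for every $2\le k\le d$ the following are equivalent: (i) $\mathrm{CN}(\rho)=k$; (ii) $\mathrm{ed}(\rho')=k+1$; (iii) $\mathrm{ed}(\rho'')=k$.
   Context: Fix an orthonormal (incoherent) basis $\{|i\rangle\}_{i=1}^d$ of $\mathbb{C}^d$. The coherence rank $\mathrm{CR}(|\psi\rangle)$ is the number of nonzero coefficients of $|\psi\rangle$ in this basis; the coherence number is $\mathrm{CN}(\rho)=\min_{\{p_i,|\psi_i\rangle\}}\max_i\mathrm{CR}(|\psi_i\rangle)$ over all pure-state decompositions $\rho=\sum_ip_i|\psi_i\rangle\langle\psi_i|$. For $1\le i\le d$, $|\underline{2^{d-i}}\rangle\in(\mathbb{C}^2)^{\otimes d}$ denotes $|0\rangle^{\otimes(i-1)}\otimes|1\rangle\otimes|0\rangle^{\otimes(d-i)}$. The activation unitary on $\mathbb{C}^d\otimes(\mathbb{C}^2)^{\otimes d}$ is $U_A=\sum_{i=1}^d|i\rangle\langle i|\otimes\mathbb{1}_2^{\otimes(i-1)}\otimes\sigma_x\otimes\mathbb{1}_2^{\otimes(d-i)}$ (so $U_A\,|i\rangle|0\rangle^{\otimes d}=|i\rangle|\underline{2^{d-i}}\rangle$). Let $\mathcal{F}$ be the Fourier unitary on $\mathbb{C}^d$, $\mathcal{F}|j\rangle=\frac1{\sqrt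 d}\sum_{m=1}^d e^{2\pi i jm/d}|m\rangle$, and for $m=1,\dots,d$ let $U_D^{(m)}=\bigotimes_{j=1}^d\big(|0\rangle\langle0|+e^{-2\pi i jm/d}|1\rangle\langle1|\big)$ acting on the $d$ qubits (the $j$-th factor on the $j$-th qubit). The one-way LOCC decoupling map is $\Delta(X)=\sum_{m=1}^d U_D^{(m)}\,\mathrm{Tr}_{\mathrm{qudit}}\big[(|m\rangle\langle m|\otimes\mathbb{1})(\mathcal{F}\otimes\mathbb{1})X(\mathcal{F}^\dagger\otimes\mathbb{1})\big]\,U_D^{(m)\dagger}$; on pure states it sends $\sum_ic_i|i\rangle|\underline{2^{d-i}}\rangle$ to $\sum_ic_i|\underline{2^{d-i}}\rangle$. A pure state of a multipartite system is $k$-producible if it is a tensor product of factors each pertaining to at most $k$ parties; a mixed state is $k$-producible if it is a convex combination of $k$-producible pure states; $\mathrm{ed}(\rho)=k$ (entanglement depth; genuinely $k$-partite entangled) means $\rho$ is $k$-producible but not $(k-1)$-producible. *)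

From HB Require Import structures.
From mathcomp Require Import all_boot all_order all_algebra.
Set Implicit Arguments. Unset Strict Implicit. Unset Printing Implicit Defensive.
Import Order.TTheory GRing.Theory Num.Theory.
Local Open Scope ring_scope.

Section Q.
Variable C : numClosedFieldType.

(* Operators on the Hilbert space with orthonormal basis indexed by T:
   A i j = <i|A|j>. *)
Definition op (T : finType) := T -> T -> C.

Definition opmul (T : finType) (A B : op T) : op T :=
  fun i j => \sum_(k : T) A i k * B k j.
Definition adj (T : finType) (A : op T) : op T := fun i j => (A j i)^*.
Definition tens (T1 T2 : finType) (A : op T1) (B : op T2) : op (T1 * T2)%type :=
  fun x y => A x.1 y.1 * B x.2 y.2.
Definition id_op (T : finType) : op T := fun i j => (i == j)%:R.

Definition density (T : finType) (A : op T) : Prop :=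
  (forall v : T -> C, 0 <= \sum_(i : T) \sum_(j : T) (v i)^* * A i j * v j)
  /\ \sum_(i : T) A i i = 1.

Definition mixture_of (T : finType) (good : (T -> C) -> Prop) (A : op T) : Prop :=
  exists (n : nat) (p : 'I_n -> C) (psi : 'I_n -> T -> C),
    (forall i, 0 <= p i) /\ \sum_(i < n) p i = 1 /\
    (forall i, \sum_(t : T) `|psi i t| ^+ 2 = 1) /\
    (forall i, good (psi i)) /\
    forall a b, A a b = \sum_(i < n) p i * psi i a * (psi i b)^*.

Definition coh_rank (T : finType) (psi : T -> C) : nat := #|[pred t | psi t != 0]|.

Definition CN_le (T : finType) (rho : op T) (k : nat) : Prop :=
  mixture_of (fun psi => (coh_rank psi <= k)%N) rho.

Definition coherence_number_is (T : finType) (rho : op T) (k : nat) : Prop :=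
  CN_le rho k /\ ~ CN_le rho k.-1.

(* A multipartite system: basis B of the joint space, set of parties J, and
   ag j b b' meaning "the local basis label of party j is the same in b and b'".
   A function on B is local to S if it depends only on the labels of parties
   in S; a product over a partition of such local factors is a tensor product. *)
Definition local_to (J B : finType) (ag : J -> B -> B -> Prop) (S : {set J})
    (phi : B -> C) : Prop :=
  forall b b', (forall j, j \in S -> ag j b b') -> phi b = phi b'.

Definition kprod_pure (J B : finType) (ag : J -> B -> B -> Prop) (k : nat)
    (psi : B -> C) : Prop :=
  exists P : {set {set J}},
    partition P [set: J] /\ (forall S, S \in P -> (#|S| <= k)%N) /\
    exists phi : {set J} -> B -> C,
      (forall S, S \in P -> local_to ag S (phi S)) /\
      forall b, psi b = \prod_(S in P) phi S b.

Definition kproducible (J B : finType) (ag : J -> B -> B -> Prop) (k : nat)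
    (rho : op B) : Prop := mixture_of (kprod_pure ag k) rho.

Definition edepth_is (J B : finType) (ag : J -> B -> B -> Prop) (rho : op B)
    (k : nat) : Prop :=
  kproducible ag k rho /\ ~ kproducible ag k.-1 rho.

(* Qudit basis |i>, i = 1..d, is the ordinal i-1 : 'I_d.
   d qubits: bit strings {ffun 'I_d -> bool}; qubit j (1-based) is ordinal j-1. *)
Definition qubits (d : nat) := {ffun 'I_d -> bool}.

Definition ag_qubits (d : nat) (j : 'I_d) (b b' : qubits d) : Prop := b j = b' j.

(* parties of qudit + d qubits: None = the qudit, Some j = qubit j *)
Definition ag_full (d : nat) (j : option 'I_d) (b b' : ('I_d * qubits d)%type) : Prop :=
  match j with
  | None => b.1 = b'.1
  | Some j => b.2 j = b'.2 j
  end.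

Definition qtensor (d : nat) (M : 'I_d -> bool -> bool -> C) : op (qubits d) :=
  fun b b' => \prod_(j < d) M j (b j) (b' j).

Definition id2 : bool -> bool -> C := fun a b => (a == b)%:R.
Definition sigmax : bool -> bool -> C := fun a b => (a != b)%:R.
Definition proj0 : bool -> bool -> C := fun a b => (~~ a && ~~ b)%:R.

(* U_A = sum_i |i><i| (x) 1^{(i-1)} (x) sigma_x (x) 1^{(d-i)} *)
Definition U_A (d : nat) : op ('I_d * qubits d)%type :=
  fun x y => (x.1 == y.1)%:R *
    qtensor (fun j => if j == x.1 then sigmax else id2) x.2 y.2.

(* e^{2 pi i / d}: d.-root (-1) is e^{i pi / d} (minimal nonneg. argument) *)
Definition omega (d : nat) : C := (d.-root (-1)) ^+ 2.

(* Fourier: F|j> = 1/sqrt d sum_m e^{2 pi i j m/d} |m>, j,m = 1..d *)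
Definition fourier (d : nat) : op 'I_d :=
  fun m j => omega d ^+ ((j.+1) * (m.+1)) / sqrtC (d%:R).

(* U_D^{(m)} = (x)_j (|0><0| + e^{-2 pi i j m/d} |1><1|), j = 1..d *)
Definition U_D (d : nat) (m : 'I_d) : op (qubits d) :=
  qtensor (fun j a b =>
    if a == b then (if a then omega d ^- ((j.+1) * (m.+1)) else 1) else 0).

Definition proj_ket (T : finType) (m : T) : op T :=
  fun i j => ((i == m) && (j == m))%:R.

Definition ptrace_qudit (d : nat) (X : op ('I_d * qubits d)%type) : op (qubits d) :=
  fun b b' => \sum_(i : 'I_d) X (i, b) (i, b').

Definition Delta (d : nat) (X : op ('I_d * qubits d)%type) : op (qubits d) :=
  fun b b' => \sum_(m : 'I_d)
    opmul (opmul (U_D m)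
      (ptrace_qudit
        (opmul (tens (proj_ket m) (@id_op (qubits d)))
          (opmul (tens (@fourier d) (@id_op (qubits d)))
            (opmul X (tens (adj (@fourier d)) (@id_op (qubits d))))))))
      (adj (U_D m)) b b'.

Definition rho_prime (d : nat) (rho : op 'I_d) : op ('I_d * qubits d)%type :=
  opmul (@U_A d) (opmul (tens rho (qtensor (fun _ => proj0))) (adj (@U_A d))).

End Q.

(* Both [rho_prime rho] and [Delta (rho_prime rho)] are images of [rho] under an
   isometry sending basis vectors to basis vectors, |i> |-> |i>|2^(d-i)> and
   |i> |-> |2^(d-i)> (for [Delta], the Fourier phases are exactly undone by U_D).
   Pure-state decompositions of such an image are images of decompositions of
   [rho], since their components with positive weight live on the image.
   A superposition of m one-hot strings is the product of an m-qubit factor and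
   |0> on the other qubits; conversely, in any product decomposition the vanishing
   amplitudes of two-hot strings force all qubits of the support (and the qudit)
   into one block.  Hence CN(rho) <= m iff rho' is (m+1)-producible iff
   Delta(rho') is m-producible, and the three equalities follow. *)

From HB Require Import structures.
From mathcomp Require Import all_boot all_order all_algebra.
From mathcomp Require Import ring.
From Stdlib Require Import Classical FunctionalExtensionality.
Set Implicit Arguments. Unset Strict Implicit. Unset Printing Implicit Defensive.
Import Order.TTheory GRing.Theory Num.Theory.
Local Open Scope ring_scope.

Lemma mixture_diag_eq0 (C : numClosedFieldType) (T : finType) n (p : 'I_n -> C)
    (psi : 'I_n -> T -> C) (A : op C T) x i :
  (forall j, 0 <= p j) -> (forall a b, A a b = \sum_j p j * psi j a * (psi j b)^* ) ->
  A x x = 0 -> p i != 0 -> psi i x = 0.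
Proof.
move=> p0 defA Axx0 pi0.
have termP j : 0 <= p j * psi j x * (psi j x)^* by rewrite -mulrA mulr_ge0 ?mul_conjC_ge0.
have sum0 : \sum_j p j * psi j x * (psi j x)^* = 0 by rewrite -defA.
have /eqP := @psumr_eq0P _ _ xpredT _ (fun j _ => termP j) sum0 i isT.
by rewrite -mulrA mulf_eq0 (negbTE pi0) mul_conjC_eq0 => /eqP.
Qed.

Section Pushforward.
Variables (C : numClosedFieldType) (T1 T2 : finType) (g : T2 -> T1).

Definition pushvec (psi : T2 -> C) : T1 -> C :=
  fun x => \sum_a (x == g a)%:R * psi a.

Definition pushop (A : op C T2) : op C T1 :=
  fun x y => \sum_a \sum_b (x == g a)%:R * (y == g b)%:R * A a b.

Lemma pushvec_out psi x : x \notin codom g -> pushvec psi x = 0.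
Proof.
move=> xg; apply: big1 => a _; case: eqP => [xa|]; last by rewrite mul0r.
by rewrite xa codom_f in xg.
Qed.

Lemma pushop_out A x y : (x \notin codom g) || (y \notin codom g) -> pushop A x y = 0.
Proof.
move=> xyg; apply: big1 => a _; apply: big1 => b _.
case/orP: xyg => [xg|yg].
  by case: eqP => [xa|]; [rewrite xa codom_f in xg | rewrite !mul0r].
by case: (y =P g b) => [yb|]; [rewrite yb codom_f in yg | rewrite mulr0 mul0r].
Qed.

Lemma pushop_mixture n (p : 'I_n -> C) (psi : 'I_n -> T2 -> C) A :
  (forall a b, A a b = \sum_i p i * psi i a * (psi i b)^*) ->
  pushop A =2 fun x y => \sum_i p i * pushvec (psi i) x * (pushvec (psi i) y)^*.
Proof.
move=> defA x y; rewrite /pushop /pushvec.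
under eq_bigr => a _ do under eq_bigr => b _ do rewrite defA mulr_sumr.
under [RHS]eq_bigr => i _ do rewrite rmorph_sum -mulrA big_distrlr mulr_sumr.
rewrite [RHS]exchange_big; apply: eq_bigr => a _.
under [RHS]eq_bigr => i _ do rewrite mulr_sumr.
rewrite [RHS]exchange_big.
apply: eq_bigr => b _; apply: eq_bigr => i _.
by rewrite rmorphM /= conjC_nat; ring.
Qed.

Hypothesis g_inj : injective g.

Lemma pushvecE psi a : pushvec psi (g a) = psi a.
Proof.
rewrite /pushvec (big_only1 a) ?eqxx ?mul1r // => b ba _.
by rewrite (inj_eq g_inj) eq_sym (negbTE ba) mul0r.
Qed.

Lemma pushopE A a b : pushop A (g a) (g b) = A a b.
Proof.
rewrite /pushop (big_only1 a) // => [|a' a'a _]; last first.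
  by apply: big1 => b' _; rewrite (inj_eq g_inj) eq_sym (negbTE a'a) !mul0r.
rewrite (big_only1 b) ?eqxx ?mul1r // => b' b'b _.
by rewrite (inj_eq g_inj) eq_sym (negbTE b'b) mulr0 mul0r.
Qed.

Lemma sum_codom (F : T1 -> C) :
  (forall x, x \notin codom g -> F x = 0) -> \sum_x F x = \sum_a F (g a).
Proof.
move=> F0; rewrite (bigID (mem (codom g))) /= [X in _ + X]big1 ?addr0 //.
by rewrite -big_uniq ?big_image // map_inj_uniq ?enum_uniq.
Qed.

Lemma pushvec_norm psi :
  \sum_x `|pushvec psi x| ^+ 2 = \sum_a `|psi a| ^+ 2.
Proof.
rewrite (sum_codom (F := fun x => `|pushvec psi x| ^+ 2)) => [|x xg].
  by apply: eq_bigr => a _; rewrite pushvecE.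
by rewrite pushvec_out // normr0 expr0n.
Qed.

Lemma pushvec_comp psi :
  (forall x, x \notin codom g -> psi x = 0) -> pushvec (psi \o g) = psi.
Proof.
move=> psi0; apply: functional_extensionality => x.
case: (boolP (x \in codom g)) => [/codomP[a ->]|xg]; first by rewrite pushvecE.
by rewrite pushvec_out ?psi0.
Qed.

Lemma mixture_pushop (good1 : (T1 -> C) -> Prop) (good2 : (T2 -> C) -> Prop) A1 A2 :
  A1 =2 pushop A2 ->
  (forall psi, \sum_a `|psi a| ^+ 2 = 1 -> good2 psi -> good1 (pushvec psi)) ->
  mixture_of good2 A2 -> mixture_of good1 A1.
Proof.
move=> defA1 good12 [n [p [psi [p0 [p1 [psi1 [psig defA2]]]]]]].
exists n, p, (fun i => pushvec (psi i)); do 3!split=> //.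
- by move=> i; rewrite pushvec_norm.
- by split=> [i|x y]; [apply: good12 | rewrite defA1 (pushop_mixture defA2)].
Qed.

Lemma mixture_pullop (good1 : (T1 -> C) -> Prop) (good2 : (T2 -> C) -> Prop)
    (u : T2 -> C) A1 A2 :
  A1 =2 pushop A2 -> \sum_a `|u a| ^+ 2 = 1 -> good2 u ->
  (forall psi, \sum_a `|psi a| ^+ 2 = 1 -> good1 (pushvec psi) -> good2 psi) ->
  mixture_of good1 A1 -> mixture_of good2 A2.
Proof.
move=> defA1 u1 gu good12 [n [p [psi [p0 [p1 [psi1 [psig defA1']]]]]]].
have psi_codom i x : p i != 0 -> x \notin codom g -> psi i x = 0.
  move=> pi0 xg; apply: mixture_diag_eq0 p0 defA1' _ pi0.
  by rewrite defA1 pushop_out ?xg.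
(* components of weight 0 need not live on the image of [g]; replace them by [u] *)
pose phi i := if p i == 0 then u else psi i \o g.
have psiE i : p i != 0 -> pushvec (phi i) = psi i.
  by move=> pi0; rewrite /phi (negbTE pi0) pushvec_comp // => x; apply: psi_codom.
have phi1 i : \sum_a `|phi i a| ^+ 2 = 1.
  case: (eqVneq (p i) 0) => [pi0|pi0]; first by rewrite /phi pi0 eqxx.
  by rewrite -pushvec_norm psiE.
exists n, p, phi; do 3!split=> //; split.
  move=> i; case: (eqVneq (p i) 0) => [pi0|pi0]; first by rewrite /phi pi0 eqxx.
  by apply: good12; rewrite ?psiE.
move=> a b; rewrite -pushopE -defA1 defA1'; apply: eq_bigr => i _.
case: (eqVneq (p i) 0) => [->|pi0]; first by rewrite !mul0r.
by rewrite -(psiE i pi0) !pushvecE.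
Qed.

End Pushforward.

Section Producibility.
Variables (C : numClosedFieldType) (J B : finType) (ag : J -> B -> B -> Prop).

Lemma kprod_pure_block k (S0 : {set J}) (phi0 : B -> C) (f : J -> B -> C) (psi : B -> C) :
  S0 != set0 -> (#|S0| <= k)%N -> local_to ag S0 phi0 ->
  (forall j, j \notin S0 -> local_to ag [set j] (f j)) ->
  (forall b, psi b = phi0 b * \prod_(j in ~: S0) f j b) ->
  kprod_pure ag k psi.
Proof.
move=> S0_neq0 S0k S0loc floc psiE.
pose Q := [set [set j] | j in ~: S0].
have S0Q : S0 \notin Q.
  by apply/imsetP=> -[j]; rewrite inE => jS0 S0j; rewrite S0j set11 in jS0.
have set1_injC : {in ~: S0 &, injective (fun j : J => [set j])}.
  by move=> x y _ _; apply: set1_inj.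
have coverT : cover (S0 |: Q) = [set: J].
  apply/setP=> x; rewrite inE; apply/bigcupP.
  case: (boolP (x \in S0)) => xS0; first by exists S0; rewrite ?setU11.
  by exists [set x]; rewrite ?set11 // setU1r // imset_f // inE.
exists (S0 |: Q); split.
  apply/and3P; split; first by rewrite coverT.
    rewrite /trivIset coverT big_setU1 //= big_imset //=.
    under eq_bigr do rewrite cards1.
    by rewrite sum_nat_const muln1 cardsC cardsT.
  rewrite in_setU1 negb_or eq_sym S0_neq0 /=.
  by apply/imsetP=> -[j _ j0]; have := set11 j; rewrite -j0 inE.
split=> [S /setU1P [->|/imsetP [j _ ->]] //|].
  by rewrite cards1 (leq_trans _ S0k) // card_gt0.
exists (fun S => if S == S0 then phi0 else fun b => \prod_(j in S) f j b); split.
  move=> S /setU1P [->|SQ]; first by rewrite eqxx.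
  rewrite ifN; last by apply: contraNneq S0Q => <-.
  case/imsetP: SQ => j; rewrite inE => jS0 -> b b' bb'.
  by rewrite !big_set1; apply: floc.
move=> b; rewrite big_setU1 //= eqxx psiE big_imset //=; congr (_ * _).
apply: eq_bigr => j; rewrite inE => jS0.
by rewrite ifN ?big_set1 //; apply: contraNneq jS0 => <-; rewrite set11.
Qed.

Lemma kprod_zero_block (P : {set {set J}}) (phi : {set J} -> B -> C) (psi : B -> C) c c1 c2 :
  (forall S, S \in P -> local_to ag S (phi S)) ->
  (forall b, psi b = \prod_(S in P) phi S b) ->
  psi c = 0 -> psi c1 != 0 -> psi c2 != 0 ->
  exists2 S, S \in P &
    (exists2 x, x \in S & ~ ag x c c1) /\ (exists2 y, y \in S & ~ ag y c c2).
Proof.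
move=> philoc psiE /eqP; rewrite psiE => /prodf_eq0 [S SP /eqP phiS0] psic1 psic2.
have separates c' : psi c' != 0 -> exists2 x, x \in S & ~ ag x c c'.
  move=> psic'; apply: NNPP => nsep; move: psic'; rewrite psiE (bigD1 S) //=.
  rewrite -(philoc S SP c c') ?phiS0 ?mul0r ?eqxx // => j jS.
  by apply: NNPP => nag; apply: nsep; exists j.
by exists S => //; split; apply: separates.
Qed.

End Producibility.

Lemma prod_natb (R : comPzSemiRingType) (T : finType) (A : {pred T}) (P : pred T) :
  \prod_(j in A) (P j)%:R = [forall j in A, P j]%:R :> R.
Proof.
case: (boolP [forall j in A, P j]) => [/forall_inP PA|/forall_inPn [j jA /negbTE Pj]].
  by rewrite big1 // => j /PA ->.
by rewrite (bigD1 j) //= Pj mul0r.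
Qed.

Section CoherenceRank.
Variables (C : numClosedFieldType) (d : nat).

(* [onehot i] is the paper's |2^(d-i)>, with qubits and qudit levels counted from 0. *)
Definition onehot (i : 'I_d) : qubits d := [ffun j => j == i].
Definition onehot_pair (i : 'I_d) : ('I_d * qubits d)%type := (i, onehot i).
Definition supp (psi : 'I_d -> C) : {set 'I_d} := [set i | psi i != 0].
Definition mask (S : {set 'I_d}) (b : qubits d) : qubits d := [ffun j => (j \in S) && b j].

Lemma coh_rankE psi : coh_rank psi = #|supp psi|.
Proof. by rewrite /coh_rank cardsE. Qed.

Lemma onehot_inj : injective onehot.
Proof. by move=> i j /ffunP /(_ i); rewrite !ffunE eqxx => /esym/eqP. Qed.

Lemma onehot_pair_inj : injective onehot_pair.
Proof. by move=> i j []. Qed.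

Lemma supp_neq0 psi : \sum_a `|psi a| ^+ 2 = 1 -> supp psi != set0.
Proof.
apply: contra_eqN => /eqP supp0; rewrite big1 1?eq_sym ?oner_neq0 // => a _.
have : a \notin supp psi by rewrite supp0 inE.
by rewrite inE negbK => /eqP ->; rewrite normr0 expr0n.
Qed.

Lemma pushvec_onehot_pairE (psi : 'I_d -> C) a b :
  pushvec onehot_pair psi (a, b) = (b == onehot a)%:R * psi a.
Proof.
rewrite /pushvec (big_only1 a) /onehot_pair ?xpair_eqE ?eqxx // => a' a'a _.
by rewrite xpair_eqE eq_sym (negbTE a'a) mul0r.
Qed.

Lemma onehot_maskE (S : {set 'I_d}) b a : a \in S ->
  (b == onehot a) = (mask S b == onehot a) && [forall j in ~: S, ~~ b j].
Proof.
move=> aS; apply/idP/idP => [/eqP->|/andP[/eqP mb /forall_inP b0]].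
  apply/andP; split.
    by apply/eqP/ffunP => j; rewrite !ffunE; case: eqP => [->|]; rewrite ?aS ?andbF.
  by apply/forall_inP => j; rewrite in_setC ffunE; apply: contraNN => /eqP->.
apply/eqP/ffunP => j; have := congr1 (fun c : qubits d => c j) mb; rewrite !ffunE.
have [_ /= -> //|jS _] := boolP (j \in S).
by rewrite (negbTE (b0 j _)) ?in_setC //; case: eqP jS => // ->; rewrite aS.
Qed.

Lemma onehot_coeff_mask (psi : 'I_d -> C) b a :
  (b == onehot a)%:R * psi a =
  (mask (supp psi) b == onehot a)%:R * psi a * \prod_(j in ~: supp psi) (~~ b j)%:R.
Proof.
have [aS|] := boolP (a \in supp psi); last first.
  by rewrite inE negbK => /eqP->; rewrite !(mulr0, mul0r).
by rewrite prod_natb mulrAC -natrM mulnb (onehot_maskE _ aS).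
Qed.

Lemma pushvec_onehot_mask (psi : 'I_d -> C) b :
  pushvec onehot psi b =
  pushvec onehot psi (mask (supp psi) b) * \prod_(j in ~: supp psi) (~~ b j)%:R.
Proof. by rewrite /pushvec mulr_suml; apply: eq_bigr => a _; apply: onehot_coeff_mask. Qed.

Lemma kprod_pushvec_onehot (psi : 'I_d -> C) m :
  \sum_a `|psi a| ^+ 2 = 1 -> (coh_rank psi <= m)%N ->
  kprod_pure (@ag_qubits d) m (pushvec onehot psi).
Proof.
move=> psi1 psim.
apply: (kprod_pure_block (S0 := supp psi) (phi0 := pushvec onehot psi \o mask (supp psi))
          (f := fun j b => (~~ b j)%:R)); rewrite -?coh_rankE ?supp_neq0 //.
- move=> b b' bb' /=; congr (pushvec _ _ _); apply/ffunP => j; rewrite !ffunE.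
  by case: (boolP (j \in supp psi)) => // /bb' ->.
- by move=> j _ b b' /(_ j (set11 j)) /= ->.
- exact: pushvec_onehot_mask.
Qed.

Lemma kprod_pushvec_onehot_pair (psi : 'I_d -> C) m :
  \sum_a `|psi a| ^+ 2 = 1 -> (coh_rank psi <= m)%N ->
  kprod_pure (@ag_full d) m.+1 (pushvec onehot_pair psi).
Proof.
move=> psi1 psim; set S := supp psi.
have SomeS_None : None \notin [set Some i | i in S] by apply/imsetP => -[].
have compl_S0 : ~: (None |: [set Some i | i in S]) = [set Some i | i in ~: S].
  apply/setP => -[i|]; rewrite in_setC in_setU1 /=.
    by rewrite !mem_imset ?inE //; exact: Some_inj.
  by apply/esym/imsetP => -[].
apply: (kprod_pure_block (S0 := None |: [set Some i | i in S])
          (phi0 := fun x => pushvec onehot_pair psi (x.1, mask S x.2))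
          (f := fun j x => if j is Some i then (~~ x.2 i)%:R else 1)).
- by apply/set0Pn; exists None; rewrite setU11.
- by rewrite cardsU1 SomeS_None (card_imset _ (@Some_inj _)) -coh_rankE.
- move=> x x' xx' /=; rewrite (xx' None) ?setU11 //; congr (pushvec _ _ (_, _)).
  apply/ffunP => j; rewrite !ffunE; case: (boolP (j \in S)) => //= jS.
  by apply: (xx' (Some j)); rewrite setU1r ?imset_f.
- by move=> [i|] _ x x' // /(_ (Some i) (set11 _)) /= ->.
- move=> [a b]; rewrite compl_S0 big_imset /=; last by move=> i j _ _ [].
  by rewrite !pushvec_onehot_pairE onehot_coeff_mask mulrAC.
Qed.

Lemma kprod_pushvec_onehot_coh_rank (psi : 'I_d -> C) m :
  kprod_pure (@ag_qubits d) m (pushvec onehot psi) -> (coh_rank psi <= m)%N.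
Proof.
case=> P [Ppart [Pk [phi [philoc psiE]]]]; rewrite coh_rankE.
have [->|/set0Pn [i iS]] := eqVneq (supp psi) set0; first by rewrite cards0.
have coverP := cover_partition Ppart.
have blockP : pblock P i \in P by rewrite pblock_mem // coverP inE.
apply: leq_trans (Pk _ blockP); apply/subset_leq_card/subsetP => j jS.
have [->|ji] := eqVneq j i; first by rewrite mem_pblock coverP inE.
have nz a : a \in supp psi -> pushvec onehot psi (onehot a) != 0.
  by rewrite pushvecE ?inE //; apply: onehot_inj.
(* The two-hot string [c] has amplitude 0, so one block contains a qubit where [c]
   differs from [onehot i], which can only be j, and one where it differs from
   [onehot j], which can only be i. *)
pose c : qubits d := [ffun x => (x == i) || (x == j)].
have c0 : pushvec onehot psi c = 0.
  apply: pushvec_out; apply/codomP => -[a /ffunP ca].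
  move: (ca i) (ca j); rewrite !ffunE !eqxx orbT /= => /esym/eqP <-.
  by rewrite (negbTE ji).
have [S SP [[x xS cx] [y yS cy]]] := kprod_zero_block philoc psiE c0 (nz i iS) (nz j jS).
have xj : x = j.
  by case: (eqVneq x j) => // nxj; case: cx; rewrite /ag_qubits !ffunE (negbTE nxj) orbF.
have yi : y = i.
  by case: (eqVneq y i) => // nyi; case: cy; rewrite /ag_qubits !ffunE (negbTE nyi).
by rewrite -yi (def_pblock (partition_trivIset Ppart) SP yS) -xj.
Qed.

Section QuditBlock.
Variables (psi : 'I_d -> C) (P : {set {set option 'I_d}})
  (phi : {set option 'I_d} -> 'I_d * qubits d -> C).
Hypotheses (Ppart : partition P [set: option 'I_d])
  (philoc : forall S, S \in P -> local_to (@ag_full d) S (phi S))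
  (psiE : forall x, pushvec onehot_pair psi x = \prod_(S in P) phi S x).

Let qudit_block := pblock P None.

Lemma qudit_block_mem S x y :
  S \in P -> x \in S -> y \in S -> y \in qudit_block -> x \in qudit_block.
Proof.
move=> SP xS yS yB; have tiP := partition_trivIset Ppart.
have BP : qudit_block \in P by rewrite pblock_mem // (cover_partition Ppart) inE.
by rewrite -(def_pblock tiP BP yB) (def_pblock tiP SP yS).
Qed.

Lemma supp_in_qudit_block i j :
  i != j -> i \in supp psi -> j \in supp psi -> Some i \in qudit_block.
Proof.
move=> ij iS jS.
have NoneB : None \in qudit_block by rewrite mem_pblock (cover_partition Ppart) inE.
have nz a : a \in supp psi -> pushvec onehot_pair psi (a, onehot a) != 0.
  by rewrite pushvec_onehot_pairE eqxx mul1r inE.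
have c0 : pushvec onehot_pair psi (i, onehot j) = 0.
  by rewrite pushvec_onehot_pairE (inj_eq onehot_inj) eq_sym (negbTE ij) mul0r.
have [S SP [[[x|] xS cx] [[y|] yS cy]]] := kprod_zero_block philoc psiE c0 (nz i iS) (nz j jS);
  try by [case: cx | case: cy].
have SB z : z \in S -> z \in qudit_block by move=> zS; apply: (qudit_block_mem SP zS yS NoneB).
case: (eqVneq x i) xS => [-> /SB //|xi xS].
have jB : Some j \in qudit_block.
  apply: SB; case: (eqVneq x j) xS => [<- //|xj _].
  by case: cx; rewrite /ag_full !ffunE (negbTE xi) (negbTE xj).
(* [Some j] joins the qudit block; a second zero coefficient then pulls in [Some i] *)
pose c : qubits d := [ffun z => (z == i) || (z == j)].
have c0' : pushvec onehot_pair psi (j, c) = 0.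
  rewrite pushvec_onehot_pairE; case: eqP => [/ffunP/(_ i)|]; last by rewrite mul0r.
  by rewrite /c !ffunE eqxx (negbTE ij).
have [S' S'P [[[x'|] x'S cx'] [y' y'S cy']]] :=
  kprod_zero_block philoc psiE c0' (nz j jS) (nz i iS); last by case: cx'.
have <- : x' = i.
  by case: (eqVneq x' i) => // x'i; case: cx'; rewrite /ag_full /= !ffunE (negbTE x'i).
apply: (qudit_block_mem S'P x'S y'S); case: y' y'S cy' => [k|] // _ cy'.
case: (eqVneq k j) => [-> //|kj]; case: cy'.
by rewrite /ag_full /= !ffunE (negbTE kj) orbF.
Qed.

End QuditBlock.

Lemma kprod_pushvec_onehot_pair_coh_rank (psi : 'I_d -> C) m : (0 < m)%N ->
  kprod_pure (@ag_full d) m.+1 (pushvec onehot_pair psi) -> (coh_rank psi <= m)%N.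
Proof.
move=> m0 [P [Ppart [Pk [phi [philoc psiE]]]]]; rewrite coh_rankE.
have [/leq_trans->//|/card_gt1P [i0 [j0 [i0S j0S i0j0]]]] := leqP #|supp psi| 1.
have suppB i : i \in supp psi -> Some i \in pblock P None.
  move=> iS; have [<-|i0i] := eqVneq i0 i.
    exact: (supp_in_qudit_block Ppart philoc psiE i0j0 i0S j0S).
  by apply: (supp_in_qudit_block Ppart philoc psiE _ iS i0S); rewrite eq_sym.
have BP : pblock P None \in P by rewrite pblock_mem // (cover_partition Ppart) inE.
have sub : None |: [set Some i | i in supp psi] \subset pblock P None.
  apply/subsetP => z /setU1P [->|/imsetP [i iS ->]]; last exact: suppB.
  by rewrite mem_pblock (cover_partition Ppart) inE.
have := leq_trans (subset_leq_card sub) (Pk _ BP).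
by rewrite cardsU1 (card_imset _ (@Some_inj _)) (_ : None \notin _) //; apply/imsetP => -[].
Qed.

End CoherenceRank.

Lemma sum_pair (T1 T2 : finType) (V : nmodType) (F : (T1 * T2)%type -> V) :
  \sum_z F z = \sum_a \sum_b F (a, b).
Proof. by rewrite pair_bigA; apply: eq_bigr => -[]. Qed.

Section Operators.
Variable C : numClosedFieldType.

Lemma opmul_tens_idr (T1 T2 : finType) (X : op C (T1 * T2)%type) (A : op C T1) x y :
  opmul X (tens A (@id_op C T2)) x y = \sum_u X x (u, y.2) * A u y.1.
Proof.
rewrite /opmul sum_pair; apply: eq_bigr => u _.
rewrite (big_only1 y.2) // /tens /id_op ?eqxx ?mulr1 // => v vy _.
by rewrite (negbTE vy) !mulr0.
Qed.

Lemma opmul_tens_idl (T1 T2 : finType) (X : op C (T1 * T2)%type) (A : op C T1) x y :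
  opmul (tens A (@id_op C T2)) X x y = \sum_u A x.1 u * X (u, x.2) y.
Proof.
rewrite /opmul sum_pair; apply: eq_bigr => u _.
rewrite (big_only1 x.2) // /tens /id_op ?eqxx ?mulr1 // => v vx _.
by rewrite eq_sym (negbTE vx) mulr0 mul0r.
Qed.

Lemma conj_diag (T : finType) (U Y : op C T) (u : T -> C) b b' :
  (forall b c, U b c = (b == c)%:R * u b) ->
  opmul (opmul U Y) (adj U) b b' = u b * Y b b' * (u b')^*.
Proof.
move=> UE; rewrite /opmul /adj (big_only1 b') // => [|c cb' _]; last first.
  by rewrite UE eq_sym (negbTE cb') mul0r conjC0 mulr0.
rewrite (big_only1 b) // => [|c cb _]; last by rewrite UE eq_sym (negbTE cb) !mul0r.
by rewrite !UE !eqxx !mul1r.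
Qed.

End Operators.

Section Circuit.
Variables (C : numClosedFieldType) (d : nat).

Definition flip_bit (i : 'I_d) (b : qubits d) : qubits d :=
  [ffun j => if j == i then ~~ b j else b j].

Lemma prod_eq_bits (b c : qubits d) : \prod_(j < d) (b j == c j)%:R = (b == c)%:R :> C.
Proof.
rewrite prod_natb; congr (nat_of_bool _)%:R.
by apply/forall_inP/eqP => [bc|-> //]; apply/ffunP => j; apply/eqP/bc.
Qed.

Lemma U_AE (x z : 'I_d * qubits d) : U_A C x z = (z == (x.1, flip_bit x.1 x.2))%:R.
Proof.
rewrite /U_A /qtensor (eq_bigr (fun j => (z.2 j == flip_bit x.1 x.2 j)%:R)) => [|j _].
  by rewrite prod_eq_bits -natrM mulnb eq_sym; case: z => z1 z2; rewrite xpair_eqE andbC.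
by rewrite ffunE /sigmax /id2; case: (j == x.1); case: (x.2 j); case: (z.2 j).
Qed.

Lemma flip_bit_zero i b : [forall j, ~~ flip_bit i b j] = (b == onehot i).
Proof.
apply/forallP/eqP => [b0|-> j]; last by rewrite !ffunE; case: eqP.
by apply/ffunP => j; have := b0 j; rewrite !ffunE; case: (j == i); case: (b j).
Qed.

Lemma rho_primeE (rho : op C 'I_d) x1 x2 y1 y2 :
  rho_prime rho (x1, x2) (y1, y2) = rho x1 y1 * (x2 == onehot x1)%:R * (y2 == onehot y1)%:R.
Proof.
rewrite /rho_prime /opmul (big_only1 (x1, flip_bit x1 x2)) // => [|z zx _]; last first.
  by rewrite U_AE (negbTE zx) mul0r.
rewrite U_AE eqxx mul1r (big_only1 (y1, flip_bit y1 y2)) // => [|w wy _]; last first.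
  by rewrite /adj U_AE (negbTE wy) conjC0 mulr0.
rewrite /adj U_AE eqxx conjC1 mulr1 /tens /qtensor /proj0 prod_natb -mulrA -natrM mulnb.
congr (_ * (nat_of_bool _)%:R); rewrite -!flip_bit_zero /=.
apply/forall_inP/andP => [b0|[/forallP b0 /forallP b0'] j _]; last by rewrite b0 b0'.
by split; apply/forallP => j; case/andP: (b0 j isT).
Qed.

Lemma rho_prime_pushop (rho : op C 'I_d) : rho_prime rho =2 pushop (@onehot_pair d) rho.
Proof.
have pairP x1 x2 : reflect (x2 = onehot x1) ((x1, x2) \in codom (@onehot_pair d)).
  by apply: (iffP codomP) => [[a [-> ->]] | ->] //; exists x1.
move=> [x1 x2] [y1 y2]; rewrite rho_primeE.
have [xE|xN] := eqVneq x2 (onehot x1); last first.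
  by rewrite pushop_out ?mulr0 ?mul0r //; apply/orP; left; apply/pairP/eqP.
have [yE|yN] := eqVneq y2 (onehot y1); last first.
  by rewrite pushop_out ?mulr0 //; apply/orP; right; apply/pairP/eqP.
by rewrite xE yE (pushopE (@onehot_pair_inj d)) !mulr1.
Qed.

Definition phase (m : 'I_d) (b : qubits d) : C :=
  \prod_(j < d) (if b j then omega C d ^- ((j.+1) * (m.+1)) else 1).

Lemma U_DE m (b c : qubits d) : U_D C m b c = (b == c)%:R * phase m b.
Proof.
rewrite /U_D /qtensor /phase -prod_eq_bits -big_split /=; apply: eq_bigr => j _.
by case: (b j); case: (c j); rewrite ?mul1r ?mul0r.
Qed.

Lemma ptrace_fourierE (X : op C ('I_d * qubits d)%type) m b b' :
  ptrace_qudit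
    (opmul (tens (@proj_ket C _ m) (@id_op C (qubits d)))
      (opmul (tens (@fourier C d) (@id_op C (qubits d)))
        (opmul X (tens (adj (@fourier C d)) (@id_op C (qubits d)))))) b b' =
  \sum_w \sum_v @fourier C d m w * X (w, b) (v, b') * (@fourier C d m v)^*.
Proof.
rewrite /ptrace_qudit (big_only1 m) // => [|i im _]; last first.
  by rewrite opmul_tens_idl big1 // => u _; rewrite /proj_ket (negbTE im) mul0r.
rewrite opmul_tens_idl /= (big_only1 m) // => [|u um _]; last first.
  by rewrite /proj_ket (negbTE um) andbF mul0r.
rewrite /proj_ket !eqxx mul1r opmul_tens_idl /=; apply: eq_bigr => w _.
by rewrite opmul_tens_idr mulr_sumr; apply: eq_bigr => v _; rewrite mulrA.
Qed.

Lemma DeltaE (X : op C ('I_d * qubits d)%type) b b' :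
  Delta X b b' = \sum_m \sum_w \sum_v
    phase m b * @fourier C d m w * X (w, b) (v, b') * (phase m b' * @fourier C d m v)^*.
Proof.
rewrite /Delta; apply: eq_bigr => m _; rewrite (conj_diag _ _ _ (U_DE m)) ptrace_fourierE.
rewrite mulr_sumr mulr_suml; apply: eq_bigr => w _.
rewrite mulr_sumr mulr_suml; apply: eq_bigr => v _.
by rewrite [in RHS]rmorphM /=; ring.
Qed.

Lemma omega_neq0 : (0 < d)%N -> omega C d != 0.
Proof.
move=> d0; rewrite /omega expf_neq0 //; apply/eqP => root0.
have /eqP := rootCK d0 (-1 : C); rewrite root0 expr0n gtn_eqF //=.
by rewrite eq_sym oppr_eq0 oner_eq0.
Qed.

Lemma phase_onehot_fourier m a : (0 < d)%N ->
  phase m (onehot a) * @fourier C d m a = (sqrtC d%:R)^-1.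
Proof.
move=> d0; rewrite /phase (bigD1 a) //= ffunE eqxx big1 => [|j ja]; last first.
  by rewrite ffunE (negbTE ja).
by rewrite mulr1 /fourier mulrA mulVf ?mul1r // expf_neq0 // omega_neq0.
Qed.

Lemma Delta_rho_prime_pushop (rho : op C 'I_d) : (0 < d)%N ->
  Delta (rho_prime rho) =2 pushop (@onehot d) rho.
Proof.
move=> d0 b b'.
have termE m w v : phase m b * @fourier C d m w * rho_prime rho (w, b) (v, b') *
    (phase m b' * @fourier C d m v)^* =
    (b == onehot w)%:R * (b' == onehot v)%:R * rho w v / d%:R.
  rewrite rho_primeE; have [->|_] := eqVneq b (onehot w); last by rewrite !(mulr0, mul0r).
  have [->|_] := eqVneq b' (onehot v); last by rewrite !(mulr0, mul0r).
  rewrite !phase_onehot_fourier // geC0_conj ?invr_ge0 ?sqrtC_ge0 ?ler0n //.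
  rewrite -[in RHS](sqrtCK (d%:R : C)); field.
  by rewrite sqrtC_eq0 pnatr_eq0 -lt0n.
rewrite DeltaE /pushop exchange_big; apply: eq_bigr => w _.
rewrite exchange_big; apply: eq_bigr => v _.
under eq_bigr do rewrite termE.
by rewrite sumr_const card_ord -[_ *+ d]mulr_natr mulfVK // pnatr_eq0 -lt0n.
Qed.

End Circuit.

Section Transfer.
Variables (C : numClosedFieldType) (d : nat) (rho : op C 'I_d).
Hypothesis d_gt0 : (0 < d)%N.

Let e0 : 'I_d -> C := fun a => (a == Ordinal d_gt0)%:R.

Let e0_norm : \sum_a `|e0 a| ^+ 2 = 1.
Proof.
rewrite (big_only1 (Ordinal d_gt0)) // /e0 ?eqxx ?normr1 ?expr1n // => a a0 _.
by rewrite (negbTE a0) normr0 expr0n.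
Qed.

Let e0_coh_rank m : (0 < m)%N -> (coh_rank e0 <= m)%N.
Proof.
move=> m0; rewrite coh_rankE (_ : supp e0 = [set Ordinal d_gt0]) ?cards1 //.
by apply/setP => a; rewrite !inE pnatr_eq0 eqb0 negbK.
Qed.

Lemma CN_le_kproducible_full m : (0 < m)%N ->
  CN_le rho m <-> kproducible (@ag_full d) m.+1 (rho_prime rho).
Proof.
move=> m0; have pushE := rho_prime_pushop rho; split.
  apply: (mixture_pushop (@onehot_pair_inj d) pushE) => psi.
  exact: kprod_pushvec_onehot_pair.
apply: (mixture_pullop (@onehot_pair_inj d) pushE e0_norm (e0_coh_rank m0)) => psi _.
exact: kprod_pushvec_onehot_pair_coh_rank.
Qed.

Lemma CN_le_kproducible_qubits m : (0 < m)%N ->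
  CN_le rho m <-> kproducible (@ag_qubits d) m (Delta (rho_prime rho)).
Proof.
move=> m0; have pushE := Delta_rho_prime_pushop rho d_gt0; split.
  apply: (mixture_pushop (@onehot_inj d) pushE) => psi.
  exact: kprod_pushvec_onehot.
apply: (mixture_pullop (@onehot_inj d) pushE e0_norm (e0_coh_rank m0)) => psi _.
exact: kprod_pushvec_onehot_coh_rank.
Qed.

End Transfer.

Unset Implicit Arguments. Set Strict Implicit.

Theorem theorem2 (C : numClosedFieldType) (d : nat) (rho : op C 'I_d)
    (Hrho : density rho) (k : nat) (hk2 : (2 <= k)%N) (hkd : (k <= d)%N) :
  (coherence_number_is rho k <->
     edepth_is (@ag_full d) (rho_prime rho) k.+1) /\
  (edepth_is (@ag_full d) (rho_prime rho) k.+1 <->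
     edepth_is (@ag_qubits d) (Delta (rho_prime rho)) k).
Proof.
have d_gt0 : (0 < d)%N by apply: leq_trans hkd; apply: ltnW.
case: k hk2 {hkd} => [|k] // k_gt0.
rewrite /coherence_number_is /edepth_is /=.
have := CN_le_kproducible_full rho d_gt0 (ltn0Sn k).
have := CN_le_kproducible_full rho d_gt0 k_gt0.
have := CN_le_kproducible_qubits rho d_gt0 (ltn0Sn k).
have := CN_le_kproducible_qubits rho d_gt0 k_gt0.
tauto.
Qed.
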